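(* Let $l,l'$ be nonparallel lines in the plane, and let $B\in l$, $B'\in l'$ be points, neither of which is the intersection point of $l$ and $l'$. (1) The function $X\mapsto \mathrm{disprod}_{l,l'}(X)$ is strictly concave on the segment $\overline{BB'}$ and is maximized there at the midpoint of $B$ and $B'$. (2) Suppose moreover that $X,X'$ are two distinct points of $\overline{BB'}$ such that $B,X,X',B'$ lie in this order. Then: (a) if $\mathrm{disprod}_{l,l'}$, restricted to $\overline{XX'}$, is maximized at $X'$, then $|BX'|\le \frac12|BB'|$; (b) $|BX|-|B'X'|$ and $\mathrm{disprod}_{l,l'}(X)-\mathrm{disprod}_{l,l'}(X')$ have the same sign.
   Context: For a line $l$ and point $X$, $d_l(X)$ denotes the distance from $X$ to $l$. For two lines $l,l'$, $\mathrm{disprod}_{l,l'}(X)=d_l(X)\cdot d_{l'}(X)$. *)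

From HB Require Import structures.
From mathcomp Require Import all_boot all_order all_algebra.
From mathcomp Require Import classical_sets reals.
Set Implicit Arguments. Unset Strict Implicit. Unset Printing Implicit Defensive.
Import Order.TTheory GRing.Theory Num.Theory.
Local Open Scope ring_scope.
Local Open Scope classical_set_scope.

Section Plane.
Variable R : realType.

Definition pt := (R * R)%type.

Definition dist (P Q : pt) : R :=
  Num.sqrt ((P.1 - Q.1) ^+ 2 + (P.2 - Q.2) ^+ 2).

(* The line through P with direction d (d <> 0 assumed where used). *)
Definition line (P d : pt) : set pt :=
  [set Y | exists t : R, Y = (P.1 + t * d.1, P.2 + t * d.2)].

Definition nonparallel (d d' : pt) : Prop := d.1 * d'.2 - d.2 * d'.1 != 0.

Definition dist_line (l : set pt) (X : pt) : R := inf [set dist X Y | Y in l].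

Definition disprod (l l' : set pt) (X : pt) : R := dist_line l X * dist_line l' X.

Definition seg_pt (A B : pt) (t : R) : pt :=
  (A.1 + t * (B.1 - A.1), A.2 + t * (B.2 - A.2)).

Definition segment (A B : pt) : set pt :=
  [set Y | exists t : R, 0 <= t <= 1 /\ Y = seg_pt A B t].

Definition comb (a : R) (X Y : pt) : pt :=
  (a * X.1 + (1 - a) * Y.1, a * X.2 + (1 - a) * Y.2).

Definition midpoint (A B : pt) : pt := ((A.1 + B.1) / 2, (A.2 + B.2) / 2).

End Plane.

From HB Require Import structures.
From mathcomp Require Import all_boot all_order all_algebra.
From mathcomp Require Import classical_sets reals.
From mathcomp Require Import ring lra.
Import Order.TTheory GRing.Theory Num.Theory.
Local Open Scope ring_scope.
Local Open Scope classical_set_scope.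

(* The distance from X to the line through P with direction d is |d x (X - P)| / |d|,
   and the cross product d x (X - P) is affine in X.  Parametrising [B B'] as
   B + t (B' - B), the line l through B gives d_l = t d_l(B') and the line l' through B'
   gives d_l' = (1 - t) d_l'(B).  Hence disprod = K t (1 - t) on the segment, with
   K = d_l(B') d_l'(B) > 0, and every claim becomes a fact about the parabola t (1 - t),
   which is symmetric about 1/2. *)

Lemma sum_sqr_gt0 {R : realDomainType} (v : R * R) :
  v != (0, 0) -> 0 < v.1 ^+ 2 + v.2 ^+ 2.
Proof.
case: v => a b; rewrite xpair_eqE /= => ab.
by rewrite lt0r addr_ge0 ?sqr_ge0 // andbT paddr_eq0 ?sqr_ge0 // !sqrf_eq0.
Qed.

Lemma inf_eq_lbound {R : realType} (E : set R) (x : R) :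
  E x -> lbound E x -> inf E = x.
Proof.
move=> Ex lbx; apply/le_anti/andP; split; first by apply: ge_inf => //; exists x.
by apply: lb_le_inf => //; exists x.
Qed.

Section Parabola.
Context {R : realFieldType}.
Implicit Types s t u a : R.

Lemma parabola_strict_concave s u a : s != u -> 0 < a < 1 ->
  a * (s * (1 - s)) + (1 - a) * (u * (1 - u)) <
  (a * s + (1 - a) * u) * (1 - (a * s + (1 - a) * u)).
Proof.
move=> su /andP[a0 a1]; rewrite -subr_gt0.
have -> : (a * s + (1 - a) * u) * (1 - (a * s + (1 - a) * u)) -
    (a * (s * (1 - s)) + (1 - a) * (u * (1 - u))) = a * (1 - a) * (s - u) ^+ 2.
  by ring.
have su2 : 0 < (s - u) ^+ 2 by rewrite exprn_even_gt0 // subr_eq0.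
by rewrite mulr_gt0 // mulr_gt0 ?subr_gt0.
Qed.

Lemma parabola_le_half t : t * (1 - t) <= 2^-1 * (1 - 2^-1).
Proof.
rewrite -subr_ge0.
have -> : 2^-1 * (1 - 2^-1) - t * (1 - t) = (t - 2^-1) ^+ 2 :> R by field.
exact: sqr_ge0.
Qed.

Lemma parabola_subr t (t' : R) : t * (1 - t) - t' * (1 - t') = (t' - t) * (t + t' - 1).
Proof. by ring. Qed.

(* Witness: [Num.max t 1/2] lies in [t, t'] and, when [1/2 < t'], beats [t']. *)
Lemma parabola_argmax_le_half t (t' : R) : t < t' ->
  (forall s, t <= s <= t' -> s * (1 - s) <= t' * (1 - t')) -> t' <= 2^-1.
Proof.
move=> tt' tmax; rewrite leNgt; apply/negP => half_t'.
set m := Num.max t 2^-1.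
have mt : t <= m by rewrite le_max lexx.
have mhalf : 2^-1 <= m by rewrite le_max lexx orbT.
have mt' : m < t' by rewrite gt_max tt'.
have := tmax m; rewrite mt ltW //= => /(_ isT).
rewrite -subr_le0 parabola_subr; apply/negP; rewrite -ltNge.
by rewrite mulr_gt0 ?subr_gt0 //; lra.
Qed.

End Parabola.

Section PlaneGeometry.
Context {R : realType}.
Implicit Types (P Q X B C d : pt R) (s t u a : R).

Definition cross P d Q : R := d.1 * (Q.2 - P.2) - d.2 * (Q.1 - P.1).

Lemma line_crossP P d Q : d != (0, 0) -> line P d Q <-> cross P d Q = 0.
Proof.
move=> /sum_sqr_gt0/lt0r_neq0 n0; split=> [[s ->]|c0]; first by rewrite /cross /=; ring.
set n := d.1 ^+ 2 + d.2 ^+ 2 in n0.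
exists (((Q.1 - P.1) * d.1 + (Q.2 - P.2) * d.2) / n).
case: Q c0 => q1 q2; rewrite /cross /= => c0; congr (_, _); apply/eqP; rewrite -subr_eq0.
- have -> : q1 - (P.1 + ((q1 - P.1) * d.1 + (q2 - P.2) * d.2) / n * d.1)
    = - d.2 * (d.1 * (q2 - P.2) - d.2 * (q1 - P.1)) / n by rewrite /n; field.
  by rewrite c0 mulr0 mul0r.
- have -> : q2 - (P.2 + ((q1 - P.1) * d.1 + (q2 - P.2) * d.2) / n * d.2)
    = d.1 * (d.1 * (q2 - P.2) - d.2 * (q1 - P.1)) / n by rewrite /n; field.
  by rewrite c0 mulr0 mul0r.
Qed.

Lemma cross_seg_pt P d B C t :
  cross P d (seg_pt B C t) = (1 - t) * cross P d B + t * cross P d C.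
Proof. by rewrite /cross /=; ring. Qed.

Lemma dist_line_cross P d X : d != (0, 0) ->
  dist_line (line P d) X = `|cross P d X| / Num.sqrt (d.1 ^+ 2 + d.2 ^+ 2).
Proof.
move=> /sum_sqr_gt0 n_gt0; set n := d.1 ^+ 2 + d.2 ^+ 2 in n_gt0 *.
set c := cross P d X.
have -> : `|c| / Num.sqrt n = Num.sqrt (c ^+ 2 / n).
  by rewrite sqrtrM ?sqr_ge0 // sqrtr_sqr sqrtrV // ltW.
apply: inf_eq_lbound.
- pose s0 := ((X.1 - P.1) * d.1 + (X.2 - P.2) * d.2) / n.
  exists (P.1 + s0 * d.1, P.2 + s0 * d.2); first by exists s0.
  rewrite /dist /c /cross /s0 /=; congr Num.sqrt.
  by move: (lt0r_neq0 n_gt0); rewrite /n => n0; field.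
- move=> _ [Y [s ->] <-]; rewrite /dist /=; apply: ler_wsqrtr.
  rewrite ler_pdivrMr //.
  set u := X.1 - _; set v := X.2 - _.
  have lagrange : (u ^+ 2 + v ^+ 2) * n = (d.1 * u + d.2 * v) ^+ 2 + c ^+ 2.
    by rewrite /u /v /n /c /cross; ring.
  by rewrite lagrange lerDr sqr_ge0.
Qed.

Lemma dist_line_gt0 P d Q : d != (0, 0) -> ~ line P d Q ->
  0 < dist_line (line P d) Q.
Proof.
move=> d0 PdQ; rewrite dist_line_cross // divr_gt0 //.
  by rewrite normr_gt0; apply/eqP => /(line_crossP _ _ _ d0).
by rewrite sqrtr_gt0 sum_sqr_gt0.
Qed.

Lemma dist_line_seg_pt P d B C t : d != (0, 0) -> line P d B ->
  dist_line (line P d) (seg_pt B C t) = `|t| * dist_line (line P d) C.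
Proof.
move=> d0 /(line_crossP _ _ _ d0) PdB.
by rewrite !dist_line_cross // cross_seg_pt PdB mulr0 add0r normrM mulrA.
Qed.

Lemma seg_ptC B C t : seg_pt B C t = seg_pt C B (1 - t).
Proof. by rewrite /seg_pt; congr (_, _); ring. Qed.

Lemma distC P Q : dist P Q = dist Q P.
Proof. by rewrite /dist; congr Num.sqrt; ring. Qed.

Lemma dist_gt0 P Q : P != Q -> 0 < dist P Q.
Proof.
move=> PQ; rewrite sqrtr_gt0 (sum_sqr_gt0 (P.1 - Q.1, P.2 - Q.2)) //.
apply: contraNneq PQ; case: P Q => [p1 p2] [q1 q2] /= [].
by move=> /eqP; rewrite subr_eq0 => /eqP -> /eqP; rewrite subr_eq0 => /eqP ->.
Qed.

Lemma dist_seg_pt B C t : dist B (seg_pt B C t) = `|t| * dist B C.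
Proof.
rewrite /dist /= -sqrtr_sqr -sqrtrM ?sqr_ge0 //; congr Num.sqrt; ring.
Qed.

Lemma seg_pt_comb B C a s u :
  comb a (seg_pt B C s) (seg_pt B C u) = seg_pt B C (a * s + (1 - a) * u).
Proof. by rewrite /comb /seg_pt /=; congr (_, _); ring. Qed.

Lemma midpoint_seg_pt B C : midpoint B C = seg_pt B C 2^-1.
Proof. by rewrite /midpoint /seg_pt; congr (_, _); field. Qed.

Lemma segment_seg_pt B C s t (t' : R) : t < t' -> t <= s <= t' ->
  segment (seg_pt B C t) (seg_pt B C t') (seg_pt B C s).
Proof.
move=> tt' /andP[ts st']; have t'0 : t' - t != 0 by rewrite subr_eq0 gt_eqF.
exists ((s - t) / (t' - t)); split.
  by rewrite divr_ge0 ?subr_ge0 ?(ltW tt') //= ler_pdivrMr ?subr_gt0 // mul1r lerB.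
by rewrite /seg_pt /=; congr (_, _); field.
Qed.

End PlaneGeometry.

Section DisprodOnSegment.
Variables (R : realType) (P d P' d' B B' : pt R).
Hypotheses (dN0 : d != (0, 0)) (d'N0 : d' != (0, 0)).
Hypotheses (lB : line P d B) (l'B' : line P' d' B').
Hypotheses (l'NB : ~ line P' d' B) (lNB' : ~ line P d B').

Let f := disprod (line P d) (line P' d').
Let K := dist_line (line P d) B' * dist_line (line P' d') B.

Let K_gt0 : 0 < K.
Proof. by rewrite mulr_gt0 // dist_line_gt0. Qed.

Let BB'_gt0 : 0 < dist B B'.
Proof. by rewrite dist_gt0 //; apply: contra_notN lNB' => /eqP <-. Qed.

Lemma disprod_seg_pt (t : R) : 0 <= t <= 1 -> f (seg_pt B B' t) = K * (t * (1 - t)).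
Proof.
move=> /andP[t0 t1]; rewrite /f /disprod dist_line_seg_pt // seg_ptC.
by rewrite dist_line_seg_pt // !ger0_norm ?subr_ge0 // /K; ring.
Qed.

Lemma disprod_segment_strict_concave (X Y : pt R) (a : R) :
  segment B B' X -> segment B B' Y -> X != Y -> 0 < a < 1 ->
  a * f X + (1 - a) * f Y < f (comb a X Y).
Proof.
move=> [s [s01 ->]] [u [u01 ->]] XY a01.
have su : s != u by apply: contraNneq XY => ->.
have c01 : 0 <= a * s + (1 - a) * u <= 1.
  by move: s01 u01 a01 => /andP[? ?] /andP[? ?] /andP[? ?]; apply/andP; split; nra.
rewrite seg_pt_comb !disprod_seg_pt // !(mulrCA _ K) -mulrDr ltr_pM2l //.
exact: parabola_strict_concave.
Qed.

Lemma disprod_segment_le_midpoint (X : pt R) :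
  segment B B' X -> f X <= f (midpoint B B').
Proof.
move=> [t [t01 ->]]; rewrite midpoint_seg_pt !disprod_seg_pt //; last first.
  by apply/andP; split; lra.
by rewrite ler_pM2l // parabola_le_half.
Qed.

Lemma disprod_argmax_le_half (t t' : R) : 0 <= t -> t < t' -> t' <= 1 ->
  (forall Y, segment (seg_pt B B' t) (seg_pt B B' t') Y -> f Y <= f (seg_pt B B' t')) ->
  dist B (seg_pt B B' t') <= dist B B' / 2.
Proof.
move=> t0 tt' t'1 fmax; rewrite dist_seg_pt ger0_norm ?(le_trans t0 (ltW tt')) //.
rewrite mulrC ler_pM2l //; apply: (parabola_argmax_le_half _ _ tt') => s /andP[ts st'].
have /fmax : segment (seg_pt B B' t) (seg_pt B B' t') (seg_pt B B' s).
  by apply: segment_seg_pt; rewrite ?ts.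
by rewrite !disprod_seg_pt ?ler_pM2l //; apply/andP; split; lra.
Qed.

Lemma sg_dist_disprod (t t' : R) : 0 <= t -> t < t' -> t' <= 1 ->
  Num.sg (dist B (seg_pt B B' t) - dist B' (seg_pt B B' t')) =
  Num.sg (f (seg_pt B B' t) - f (seg_pt B B' t')).
Proof.
move=> t0 tt' t'1.
rewrite [X in dist B' X]seg_ptC !dist_seg_pt (distC B') !ger0_norm; try lra.
rewrite !disprod_seg_pt; try (apply/andP; split; lra).
rewrite -mulrBr parabola_subr -mulrBl.
have -> : t - (1 - t') = t + t' - 1 by ring.
rewrite sgrM (gtr0_sg BB'_gt0) mulr1 sgrM (gtr0_sg K_gt0) mul1r.
by rewrite sgrM (@gtr0_sg _ (t' - t)) ?mul1r ?subr_gt0.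
Qed.

End DisprodOnSegment.

Theorem lemma3 (R : realType) (P d P' d' B B' : pt R) :
  d != (0, 0) -> d' != (0, 0) -> nonparallel d d' ->
  line P d B -> line P' d' B' ->
  ~ line P' d' B -> ~ line P d B' ->
  let f := disprod (line P d) (line P' d') in
  (* (1) strict concavity on [B B'] and maximum at the midpoint *)
  ((forall (X Y : pt R) (a : R), segment B B' X -> segment B B' Y -> X != Y ->
      0 < a < 1 -> a * f X + (1 - a) * f Y < f (comb a X Y)) /\
   (forall X : pt R, segment B B' X -> f X <= f (midpoint B B'))) /\
  (* (2) for X, X' distinct on [B B'] with B, X, X', B' in this order *)
  (forall (X X' : pt R) (t t' : R), 0 <= t -> t < t' -> t' <= 1 ->
      X = seg_pt B B' t -> X' = seg_pt B B' t' ->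
      ((forall Y : pt R, segment X X' Y -> f Y <= f X') ->
         dist B X' <= dist B B' / 2) /\
      Num.sg (dist B X - dist B' X') = Num.sg (f X - f X')).
Proof.
move=> dN0 d'N0 _ lB l'B' l'NB lNB' f.
split; first split.
- exact: disprod_segment_strict_concave.
- exact: disprod_segment_le_midpoint.
move=> X X' t t' t0 tt' t'1 -> ->; split.
- exact: disprod_argmax_le_half.
- exact: sg_dist_disprod.
Qed.
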